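(* Let $u$ be a positive solution of $\frac{u''}{1+(u')^2}=\frac{xu'}{2}-\frac u2+\frac{n-1}{u}$ on a finite interval $(x_1,x_2)$. If $u'<0$ and $u''>0$ on $(x_1,x_2)$, then $\lim_{x\to x_2}u(x)>0$.
   Context: $n\ge 2$ is a fixed integer. *)

From Stdlib Require Import Reals.
From Coquelicot Require Import Coquelicot.

(* As long as u' < 0 and u'' > 0, the slope u' stays in [-M, 0) with M := -u'(x0), so u is
   decreasing and M-Lipschitz on [x0, x2).  If u tended to 0 at x2 it would therefore satisfy
   u(x) <= M (x2 - x), and the equation (with n - 1 >= 1) would force
   u'' >= 1/u - C >= 1/(M (x2 - x)) - C.  Integrating, u' would grow like -log(x2 - x)/M and
   become positive, a contradiction.  Hence u is bounded below by some m > 0 near x2, and being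
   monotone it has a limit L >= m. *)
From Stdlib Require Import Reals Lra Psatz Classical.
From Coquelicot Require Import Coquelicot.
Open Scope R_scope.

Lemma increment_le_of_derive_le (f g df dg : R -> R) (a b : R) : a <= b ->
  (forall x, a <= x <= b -> is_derive f x (df x)) ->
  (forall x, a <= x <= b -> is_derive g x (dg x)) ->
  (forall x, a <= x <= b -> dg x <= df x) ->
  g b - g a <= f b - f a.
Proof.
  intros Hab Hf Hg Hle.
  destruct (MVT_gen (fun x => f x - g x) a b (fun x => df x - dg x)) as [c [Hc Hmvt]].
  - intros x Hx. rewrite Rmin_left, Rmax_right in Hx by lra.
    apply (is_derive_minus f g); [apply Hf | apply Hg]; lra.
  - intros x Hx. rewrite Rmin_left, Rmax_right in Hx by lra.
    apply continuity_pt_filterlim.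
    apply (@ex_derive_continuous R_AbsRing R_NormedModule (fun y => f y - g y)).
    exists (df x - dg x). apply (is_derive_minus f g); [apply Hf | apply Hg]; lra.
  - rewrite Rmin_left, Rmax_right in Hc by lra.
    pose proof (Hle c Hc). simpl in Hmvt. nra.
Qed.

Lemma increment_ge_of_derive_ge (f df : R -> R) (K a b : R) : a <= b ->
  (forall x, a <= x <= b -> is_derive f x (df x)) ->
  (forall x, a <= x <= b -> K <= df x) ->
  K * (b - a) <= f b - f a.
Proof.
  intros Hab Hf HK.
  assert (Hlin : forall x, is_derive (fun y => K * y) x K)
    by (intros x; auto_derive; [easy | ring]).
  pose proof (increment_le_of_derive_le f (fun y => K * y) df (fun _ => K) a b
                Hab Hf (fun x _ => Hlin x) HK).
  lra.
Qed.

Lemma nonincreasing_of_derive_nonpos (f df : R -> R) (a b : R) : a <= b ->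
  (forall x, a <= x <= b -> is_derive f x (df x)) ->
  (forall x, a <= x <= b -> df x <= 0) ->
  f b <= f a.
Proof.
  intros Hab Hf Hneg.
  pose proof (increment_le_of_derive_le (fun _ => 0) f (fun _ => 0) df a b Hab
                (fun x _ => is_derive_const 0 x) Hf Hneg).
  lra.
Qed.

Lemma is_derive_neg_log_dist (M C b x : R) : 0 < M -> x < b ->
  is_derive (fun y => - ln (b - y) / M - C * y) x (/ (M * (b - x)) - C).
Proof. intros HM Hx. auto_derive; [lra | field; lra]. Qed.

(* Compare [f] with [- ln (b - x) / M - C x], which is unbounded near [b]. *)
Lemma derive_ge_inv_dist_unbounded (f df : R -> R) (M C a b B : R) :
  0 < M -> 0 <= C -> a < b ->
  (forall x, a <= x < b -> is_derive f x (df x)) ->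
  (forall x, a <= x < b -> / (M * (b - x)) - C <= df x) ->
  exists x, a <= x < b /\ B < f x.
Proof.
  intros HM HC Hab Hf Hdf.
  set (A := ln (b - a) - M * (B - f a + C * (b - a))).
  set (d := Rmin ((b - a) / 2) (exp A / 2)).
  assert (Hexp : 0 < exp A) by apply exp_pos.
  assert (Hd0 : 0 < d) by (apply Rmin_glb_lt; lra).
  assert (Hd1 : d <= (b - a) / 2) by apply Rmin_l.
  assert (Hlnd : ln d < A).
  { rewrite <- (ln_exp A). apply ln_increasing; [lra |].
    pose proof (Rmin_r ((b - a) / 2) (exp A / 2)). fold d in H. lra. }
  exists (b - d). split; [lra |].
  pose proof (increment_le_of_derive_le f (fun y => - ln (b - y) / M - C * y) df
                (fun y => / (M * (b - y)) - C) a (b - d) ltac:(lra)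
                (fun x Hx => Hf x ltac:(lra))
                (fun x Hx => is_derive_neg_log_dist M C b x HM ltac:(lra))
                (fun x Hx => Hdf x ltac:(lra))) as Hinc.
  cbv beta in Hinc. replace (b - (b - d)) with d in Hinc by ring.
  assert (Hgain : B - f a + C * (b - a) < - ln d / M - - ln (b - a) / M).
  { replace (- ln d / M - - ln (b - a) / M) with ((ln (b - a) - ln d) / M) by (field; lra).
    apply (Rmult_lt_reg_r M); [lra |].
    replace ((ln (b - a) - ln d) / M * M) with (ln (b - a) - ln d) by (field; lra).
    unfold A in Hlnd. lra. }
  assert (0 <= C * d) by (apply Rmult_le_pos; lra).
  lra.
Qed.

Lemma nonincreasing_left_limit (f : R -> R) (a b m : R) : a < b ->
  (forall x y, a < x -> x <= y -> y < b -> f y <= f x) ->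
  (forall x, a < x < b -> m <= f x) ->
  exists L, m <= L /\ filterlim f (at_left b) (locally L).
Proof.
  intros Hab Hmono Hm.
  set (E := fun y => exists t, a < t < b /\ y = - f t).
  destruct (completeness E) as [S [HSub HSleast]].
  - exists (- m). intros y [t [Ht ->]]. pose proof (Hm t Ht). lra.
  - exists (- f ((a + b) / 2)), ((a + b) / 2). split; [lra | easy].
  exists (- S). split.
  { assert (S <= - m) by (apply HSleast; intros y [t [Ht ->]]; pose proof (Hm t Ht); lra). lra. }
  apply filterlim_locally. intros eps.
  assert (Hnear : exists t, a < t < b /\ f t < - S + eps).
  { apply NNPP; intro Hfar.
    assert (S <= S - eps).
    { apply HSleast. intros y [t [Ht ->]]. apply Rnot_lt_le. intro.
      apply Hfar. exists t. split; [easy | lra]. }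
    pose proof (cond_pos eps). lra. }
  destruct Hnear as [t [Ht Hft]].
  assert (Hdist : 0 < b - t) by lra.
  exists (mkposreal _ Hdist). intros x Hx Hxb.
  unfold ball in Hx |- *; simpl in Hx |- *.
  unfold AbsRing_ball, abs, minus, plus, opp in Hx |- *; simpl in Hx |- *.
  apply Rabs_def2 in Hx.
  assert (Hxt : t <= x) by lra.
  pose proof (Hmono t x ltac:(lra) Hxt Hxb).
  assert (- f x <= S) by (apply HSub; exists x; split; [lra | easy]).
  apply Rabs_def1; lra.
Qed.

Section Lemma2p4.

Variables (n : nat) (x1 x2 : R) (u u1 u2 : R -> R).
Hypotheses (hn : (2 <= n)%nat)
  (hd1 : forall x, x1 < x < x2 -> is_derive u x (u1 x))
  (hd2 : forall x, x1 < x < x2 -> is_derive u1 x (u2 x))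
  (hpos : forall x, x1 < x < x2 -> 0 < u x)
  (hode : forall x, x1 < x < x2 ->
     u2 x / (1 + (u1 x) ^ 2) = x * u1 x / 2 - u x / 2 + (INR n - 1) / u x)
  (hdec : forall x, x1 < x < x2 -> u1 x < 0)
  (hconv : forall x, x1 < x < x2 -> 0 < u2 x).

Variable x0 : R.
Hypothesis hx0 : x1 < x0 < x2.

Let M := - u1 x0.

Lemma u_nonincreasing x y : x1 < x -> x <= y -> y < x2 -> u y <= u x.
Proof.
  intros Hx Hxy Hy. apply (nonincreasing_of_derive_nonpos u u1); [easy | |];
    intros z Hz; [apply hd1 | apply Rlt_le, hdec]; lra.
Qed.

Lemma u1_ge_neg_M x : x0 <= x < x2 -> - M <= u1 x.
Proof.
  intros Hx. unfold M.
  pose proof (increment_ge_of_derive_ge u1 u2 0 x0 x ltac:(lra)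
    (fun z Hz => hd2 z ltac:(lra)) (fun z Hz => Rlt_le _ _ (hconv z ltac:(lra)))).
  lra.
Qed.

Lemma u_lipschitz x y : x0 <= x -> x <= y -> y < x2 -> u x <= u y + M * (y - x).
Proof.
  intros Hx Hxy Hy.
  pose proof (increment_ge_of_derive_ge u u1 (- M) x y Hxy
    (fun z Hz => hd1 z ltac:(lra)) (fun z Hz => u1_ge_neg_M z ltac:(lra))).
  lra.
Qed.

Lemma u_le_dist_of_inf_zero :
  (forall m, 0 < m -> exists y, x0 < y < x2 /\ u y < m) ->
  forall x, x0 <= x < x2 -> u x <= M * (x2 - x).
Proof.
  intros Hsmall x Hx. apply Rle_plus_epsilon. intros m Hm.
  destruct (Hsmall m Hm) as [y [Hy Huy]].
  assert (0 <= M) by (unfold M; pose proof (hdec x0 hx0); lra).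
  destruct (Rle_lt_dec y x) as [Hyx | Hxy].
  - pose proof (u_nonincreasing y x ltac:(lra) Hyx ltac:(lra)).
    assert (0 <= M * (x2 - x)) by (apply Rmult_le_pos; lra). lra.
  - pose proof (u_lipschitz x y ltac:(lra) ltac:(lra) ltac:(lra)).
    assert (M * (y - x) <= M * (x2 - x)) by (apply Rmult_le_compat_l; lra). lra.
Qed.

Let C := (Rabs x2 * M + u x0) / 2.

(* The right-hand side of the equation is positive (it equals u''/(1 + u'^2) > 0), so
   u'' >= rhs, and each term of rhs is bounded below using -M <= u' < 0, u <= u(x0), n >= 2. *)
Lemma u2_ge_inv_u x : x0 <= x < x2 -> / u x - C <= u2 x.
Proof.
  intros Hx.
  assert (Hx' : x1 < x < x2) by lra.
  pose proof (hode x Hx') as Hode. pose proof (hconv x Hx').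
  pose proof (hpos x Hx'). pose proof (hdec x Hx'). pose proof (u1_ge_neg_M x Hx).
  pose proof (u_nonincreasing x0 x ltac:(lra) ltac:(lra) ltac:(lra)).
  assert (Hslope : - (Rabs x2 * M) <= x * u1 x).
  { pose proof (Rle_abs x2). destruct (Rle_dec 0 x).
    - assert (0 <= x * (u1 x + M)) by (apply Rmult_le_pos; lra).
      assert (0 <= (Rabs x2 - x) * M) by (apply Rmult_le_pos; lra).
      nra.
    - assert (0 <= Rabs x2 * M) by (apply Rmult_le_pos; [apply Rabs_pos | lra]).
      nra. }
  assert (Hn : 1 <= INR n - 1) by (apply (le_INR 2 n) in hn; simpl in hn; lra).
  assert (Hinv : / u x <= (INR n - 1) / u x).
  { unfold Rdiv. assert (0 < / u x) by (apply Rinv_0_lt_compat; lra). nra. }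
  set (rhs := x * u1 x / 2 - u x / 2 + (INR n - 1) / u x) in *.
  assert (Hu2 : u2 x = rhs * (1 + u1 x ^ 2)) by (rewrite <- Hode; field; nra).
  assert (0 < rhs) by nra.
  assert (rhs <= u2 x) by nra.
  unfold rhs, C in *. lra.
Qed.

Lemma u_bounded_below : exists m, 0 < m /\ forall x, x0 < x < x2 -> m <= u x.
Proof.
  apply NNPP. intros Hno.
  assert (Hsmall : forall m, 0 < m -> exists y, x0 < y < x2 /\ u y < m).
  { intros m Hm. apply NNPP. intros Hbig. apply Hno. exists m. split; [easy |].
    intros x Hx. apply Rnot_lt_le. intros Hux. apply Hbig. exists x. easy. }
  assert (HM : 0 < M) by (unfold M; pose proof (hdec x0 hx0); lra).
  assert (HC : 0 <= C).
  { unfold C. pose proof (hpos x0 hx0).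
    assert (0 <= Rabs x2 * M) by (apply Rmult_le_pos; [apply Rabs_pos | lra]). lra. }
  destruct (derive_ge_inv_dist_unbounded u1 u2 M C x0 x2 0 HM HC ltac:(lra))
    as [x [Hx Hux]].
  - intros x Hx. apply hd2. lra.
  - intros x Hx.
    pose proof (u_le_dist_of_inf_zero Hsmall x Hx). pose proof (hpos x ltac:(lra)).
    pose proof (u2_ge_inv_u x Hx).
    assert (/ (M * (x2 - x)) <= / u x) by (apply Rinv_le_contravar; lra).
    lra.
  - pose proof (hdec x ltac:(lra)). lra.
Qed.

End Lemma2p4.

Theorem lemma2p4 (n : nat) (hn : (2 <= n)%nat)
  (x1 x2 : R) (hx : x1 < x2)
  (u u1 u2 : R -> R)
  (hd1 : forall x, x1 < x < x2 -> is_derive u x (u1 x))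
  (hd2 : forall x, x1 < x < x2 -> is_derive u1 x (u2 x))
  (hpos : forall x, x1 < x < x2 -> 0 < u x)
  (hode : forall x, x1 < x < x2 ->
     u2 x / (1 + (u1 x) ^ 2) = x * u1 x / 2 - u x / 2 + (INR n - 1) / u x)
  (hdec : forall x, x1 < x < x2 -> u1 x < 0)
  (hconv : forall x, x1 < x < x2 -> 0 < u2 x) :
  exists L : R, 0 < L /\ filterlim u (at_left x2) (locally L).
Proof.
  set (x0 := (x1 + x2) / 2).
  assert (Hx0 : x1 < x0 < x2) by (unfold x0; lra).
  destruct (u_bounded_below n x1 x2 u u1 u2 hn hd1 hd2 hpos hode hdec hconv x0 Hx0)
    as [m [Hm Hlow]].
  destruct (nonincreasing_left_limit u x0 x2 m ltac:(lra)) as [L [HmL Hlim]].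
  - intros x y Hx Hxy Hy. apply (u_nonincreasing x1 x2 u u1); auto; lra.
  - exact Hlow.
  - exists L. split; [lra | exact Hlim].
Qed.
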